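(* Let $0<b<1$ and let $(G,\lambda)$ be a soft-hardcore model on $G=(V,E)$ that is $b$-marginally bounded. For every $v\in V$, let $\deg^{\mathrm{free}}_v$ be the number of neighbors $u$ of $v$ with $\lambda_u>0$. Then for every $v\in V$, $\deg^{\mathrm{free}}_v\le\frac{\ln b}{\ln(1-b)}$.
   Context: Hardcore model $(G,\lambda)$: weight $\prod_{v:\sigma_v=+1}\lambda_v$ for $\sigma\in\{-1,+1\}^V$ with $\{v:\sigma_v=+1\}$ independent, else $0$; Gibbs distribution $\mu$ is the normalized weight. Soft: $\lambda_v>0$ for all $v$. $b$-marginally bounded: for every $\Lambda\subseteq V$, feasible $\sigma\in\{\pm1\}^\Lambda$, $v\in V$, $c\in\{\pm1\}$, $\mu^\sigma_v(c)>0$ implies $\mu^\sigma_v(c)\ge b$. *)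

From mathcomp Require Import all_boot all_order all_algebra.
From mathcomp Require Import reals exp.
Set Implicit Arguments. Unset Strict Implicit. Unset Printing Implicit Defensive.
Import Order.TTheory GRing.Theory Num.Theory.
Local Open Scope ring_scope.

(* Spins: true = +1, false = -1.  Configurations are {ffun V -> bool}.
   The graph G = (V, E) is given by a relation e on a finite type V
   (assumed symmetric and irreflexive in the theorem). *)

Section Hardcore.
Variables (R : numDomainType) (V : finType) (e : rel V) (lam : V -> R).

Definition independent (S : {set V}) : bool :=
  [forall u, forall v, ((u \in S) && (v \in S)) ==> ~~ e u v].

Definition hc_weight (s : {ffun V -> bool}) : R :=
  if independent [set v | s v] then \prod_(v | s v) lam v else 0.

(* s agrees with the partial configuration t on Lam
   (a partial configuration sigma in {+-1}^Lam is represented by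
    any t : {ffun V -> bool}; only its values on Lam matter) *)
Definition agrees (Lam : {set V}) (t s : {ffun V -> bool}) : bool :=
  [forall v in Lam, s v == t v].

Definition feasible (Lam : {set V}) (t : {ffun V -> bool}) : Prop :=
  exists s : {ffun V -> bool}, agrees Lam t s /\ 0 < hc_weight s.

Definition cond_marginal (Lam : {set V}) (t : {ffun V -> bool}) (v : V) (c : bool) : R :=
  (\sum_(s | agrees Lam t s && (s v == c)) hc_weight s) /
  (\sum_(s | agrees Lam t s) hc_weight s).

Definition soft : Prop := forall v, 0 < lam v.

Definition marginally_bounded (b : R) : Prop :=
  forall (Lam : {set V}) (t : {ffun V -> bool}), feasible Lam t ->
  forall (v : V) (c : bool),
    0 < cond_marginal Lam t v c -> b <= cond_marginal Lam t v c.

Definition deg_free (v : V) : nat := #|[set u | e v u && (0 < lam u)]|.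

End Hardcore.

(* Pin a set A of vertices to -1 and let Z(A) be the total weight of the
   configurations compatible with this pinning.  Pinning one more vertex u
   removes the configurations with u = +1, whose share of Z(A) is the
   conditional marginal of u being +1; it is positive by softness, hence at
   least b, so Z(A + u) <= (1 - b) Z(A).  Pinning the d free neighbours of v
   one by one gives Z(N(v)) <= (1 - b)^d Z(empty).  On the other hand every
   independent set containing v avoids N(v), so Z(N(v)) is at least the
   weight of {v = +1}, which is at least b Z(empty).  Hence b <= (1 - b)^d,
   and taking logarithms gives the bound. *)

From mathcomp Require Import all_boot all_order all_algebra.
From mathcomp Require Import reals exp.
Set Implicit Arguments. Unset Strict Implicit. Unset Printing Implicit Defensive.
Import Order.TTheory GRing.Theory Num.Theory.
Local Open Scope ring_scope.

Definition all_minus (V : finType) : {ffun V -> bool} := [ffun=> false].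
Arguments all_minus {V}.

Section HardcoreWeights.
Variables (R : numDomainType) (V : finType) (e : rel V) (lam : V -> R).
Local Notation w := (hc_weight e lam).

Lemma hc_weight_ge0 : (forall u, 0 <= lam u) -> forall s, 0 <= w s.
Proof.
move=> lam_ge0 s; rewrite /hc_weight; case: ifP => // _.
exact: prodr_ge0.
Qed.

Lemma hc_weight_all_minus : w all_minus = 1.
Proof.
rewrite /hc_weight; have -> : [set x | @all_minus V x] = set0.
  by apply/setP => x; rewrite !inE ffunE.
have -> : independent e set0 by apply/forallP => x; apply/forallP => y; rewrite !inE.
by rewrite big_pred0 // => x; rewrite ffunE.
Qed.

Lemma hc_weight_single (u : V) : irreflexive e -> w [ffun x => x == u] = lam u.
Proof.
move=> e_irr; rewrite /hc_weight.
have -> : [set x | [ffun x => x == u] x] = [set u].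
  by apply/setP => x; rewrite !inE ffunE.
have -> : independent e [set u].
  apply/forallP => x; apply/forallP => y; rewrite !inE.
  by apply/implyP => /andP[/eqP -> /eqP ->]; rewrite e_irr.
by rewrite (big_pred1 u) // => x; rewrite ffunE.
Qed.

Lemma hc_weight_edge (s : {ffun V -> bool}) (u v : V) :
  s u -> s v -> e u v -> w s = 0.
Proof.
move=> su sv euv; rewrite /hc_weight; case: ifP => // /forallP /(_ u).
by move=> /forallP /(_ v); rewrite !inE su sv euv.
Qed.

Lemma feasible_all_minus (A : {set V}) : feasible e lam A all_minus.
Proof.
by exists all_minus; split; [apply/forall_inP | rewrite hc_weight_all_minus].
Qed.

End HardcoreWeights.

Section PinnedPartitionFunction.
Variables (R : numFieldType) (V : finType) (e : rel V) (lam : V -> R).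
Hypotheses (e_irr : irreflexive e) (hsoft : soft lam).
Local Notation w := (hc_weight e lam).

(* [cond_marginal e lam A all_minus u true] unfolds to
   [pinned_plus A u / pinned_Z A]. *)
Definition pinned_Z (A : {set V}) : R :=
  \sum_(s | agrees A all_minus s) w s.

Definition pinned_plus (A : {set V}) (u : V) : R :=
  \sum_(s | agrees A all_minus s && (s u == true)) w s.

Let w_ge0 s : 0 <= w s.
Proof. by apply: hc_weight_ge0 => u; apply: ltW. Qed.

Lemma pinned_Z_gt0 (A : {set V}) : 0 < pinned_Z A.
Proof.
rewrite /pinned_Z (bigD1 all_minus) /=; last exact/forall_inP.
by rewrite hc_weight_all_minus ltr_pwDl // sumr_ge0.
Qed.

Lemma pinned_plus_gt0 (A : {set V}) (u : V) : u \notin A -> 0 < pinned_plus A u.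
Proof.
move=> uA; rewrite /pinned_plus (bigD1 [ffun x => x == u]) /=; last first.
  rewrite ffunE eqxx andbT; apply/forall_inP => x xA; rewrite !ffunE.
  by apply/eqP/negbTE; apply: contraNneq uA => <-.
by rewrite hc_weight_single // ltr_pwDl ?hsoft // sumr_ge0.
Qed.

Lemma pinned_Z_setU1 (A : {set V}) (u : V) :
  pinned_Z (u |: A) = pinned_Z A - pinned_plus A u.
Proof.
apply/eqP; rewrite eq_sym subr_eq addrC /pinned_Z.
rewrite (bigID (fun s : {ffun V -> bool} => s u)) /=; apply/eqP.
congr (_ + _); apply: eq_bigl => s; first by rewrite eqb_id.
apply/andP/forall_inP => [[/forall_inP sA su] x | suA].
  rewrite in_setU1 => /predU1P[-> | /sA //]; rewrite ffunE.
  by apply/eqP/negbTE.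
split; first by apply/forall_inP => x xA; apply: suA; rewrite in_setU1 xA orbT.
by have := suA u; rewrite setU11 ffunE => /(_ isT) /eqP ->.
Qed.

Lemma pinned_Z_setU1_le (b : R) (A : {set V}) (u : V) :
  marginally_bounded e lam b -> u \notin A ->
  pinned_Z (u |: A) <= (1 - b) * pinned_Z A.
Proof.
move=> hmb uA; have := hmb A all_minus (feasible_all_minus e lam A) u true.
rewrite /cond_marginal -/(pinned_plus A u) -/(pinned_Z A).
rewrite divr_gt0 ?pinned_plus_gt0 ?pinned_Z_gt0 // => /(_ isT).
rewrite ler_pdivlMr ?pinned_Z_gt0 // => hplus.
by rewrite pinned_Z_setU1 mulrBl mul1r lerD2l lerN2.
Qed.

Lemma pinned_Z_le_expr (b : R) (A : {set V}) :
  marginally_bounded e lam b -> b < 1 ->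
  pinned_Z A <= (1 - b) ^+ #|A| * pinned_Z set0.
Proof.
move=> hmb hb1; rewrite cardE -{1}(set_enum A).
elim: (enum A) (enum_uniq A) => [|u s IHs] /=.
  by rewrite expr0 mul1r set_nil.
move=> /andP[us uniq_s]; rewrite set_cons.
apply: le_trans (pinned_Z_setU1_le hmb _) _; first by rewrite inE.
by rewrite exprS -mulrA ler_wpM2l ?IHs // subr_ge0 ltW.
Qed.

Lemma pinned_plus_le_pinned_Z (v : V) (A : {set V}) :
  A \subset [set u | e v u] -> pinned_plus set0 v <= pinned_Z A.
Proof.
move=> A_nbhd; rewrite /pinned_plus /pinned_Z big_mkcond [leRHS]big_mkcond /=.
apply: ler_sum => s _; case: (boolP (agrees A all_minus s)) => sA.
  by case: ifP.
case: ifP => // /andP[_ /eqP sv].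
case/forall_inPn: sA => u uA; rewrite ffunE eqbF_neg negbK => su.
have evu : e v u by move/subsetP/(_ u uA): A_nbhd; rewrite inE.
by rewrite (hc_weight_edge lam sv su evu).
Qed.

Lemma marginal_bound_le_expr (b : R) (v : V) :
  marginally_bounded e lam b -> b < 1 -> b <= (1 - b) ^+ deg_free e lam v.
Proof.
move=> hmb hb1; set N := [set u | e v u && (0 < lam u)].
have N_nbhd : N \subset [set u | e v u].
  by apply/subsetP => u; rewrite !inE => /andP[].
have := hmb set0 all_minus (feasible_all_minus e lam set0) v true.
rewrite /cond_marginal -/(pinned_plus set0 v) -/(pinned_Z set0).
rewrite divr_gt0 ?pinned_plus_gt0 ?pinned_Z_gt0 ?inE // => /(_ isT).
rewrite ler_pdivlMr ?pinned_Z_gt0 // => hplus.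
rewrite -(ler_pM2r (pinned_Z_gt0 set0)).
apply: le_trans hplus (le_trans (pinned_plus_le_pinned_Z N_nbhd) _).
exact: pinned_Z_le_expr.
Qed.

End PinnedPartitionFunction.

Lemma le_ln_ratio_of_le_expr (R : realType) (b : R) (n : nat) :
  0 < b < 1 -> b <= (1 - b) ^+ n -> n%:R <= ln b / ln (1 - b).
Proof.
case/andP=> hb0 hb1 hbn; have hb' : 0 < 1 - b by rewrite subr_gt0.
have ln_lt0 : ln (1 - b) < 0 by apply: ln_lt0; rewrite hb' /= gtrBl.
rewrite ler_ndivlMr // mulrC mulr_natr -lnXn //.
by rewrite ler_ln // posrE exprn_gt0.
Qed.

Theorem lemma6p5 (R : realType) (V : finType) (e : rel V)
  (e_sym : symmetric e) (e_irr : irreflexive e)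
  (lam : V -> R) (b : R) (hb0 : 0 < b) (hb1 : b < 1)
  (hsoft : soft lam) (hmb : marginally_bounded e lam b) :
  forall v : V, (deg_free e lam v)%:R <= ln b / ln (1 - b).
Proof.
move=> v; apply: le_ln_ratio_of_le_expr; first by rewrite hb0 hb1.
exact: marginal_bound_le_expr.
Qed.
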